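(* Let $\mathbf A\in\mathbb R^{m\times n}$, $0\le\epsilon<1$, let $0\le s<\mathrm{rank}(\mathbf A)$ be an integer, $t_s=s+\mathrm{sr}_s(\mathbf A)$, and let $k$ be an integer with $s<k<t_s$. Define $\gamma_s(k)=\sqrt{1+\frac{2(k-s)}{t_s-k}}$ and $\Phi_s(k)=\big(1+\frac{s}{k-s}\big)\gamma_s(k)$. Let $\alpha=\frac{\gamma_s(k)\,\mathrm{OPT}_k}{(1-\epsilon)(k-s)}$ and $S\sim\mathrm{DPP}(\frac1\alpha\mathbf A^\top\mathbf A)$. Then \[ \frac{\mathbb E[\mathrm{Er}_{\mathbf A}(S)]}{\mathrm{OPT}_k}\le\frac{\Phi_s(k)}{1-\epsilon}\qquad\text{and}\qquad\mathbb E[|S|]\le k-\epsilon\,\frac{k-s}{\gamma_s(k)}. \]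
   Context: For $\mathbf A\in\mathbb R^{m\times n}$ with columns $\mathbf a_1,\dots,\mathbf a_n$ and $S\subseteq\{1,\dots,n\}$, $\mathbf P_S$ is the orthogonal projection onto $\mathrm{span}\{\mathbf a_i:i\in S\}$, $\mathrm{Er}_{\mathbf A}(S)=\|\mathbf A-\mathbf P_S\mathbf A\|_F^2$, and $\mathrm{OPT}_k=\min_{\mathrm{rank}(\mathbf B)=k}\|\mathbf A-\mathbf B\|_F^2=\sum_{i>k}\lambda_i$ where $\lambda_1\ge\lambda_2\ge\dots$ are the eigenvalues of $\mathbf A^\top\mathbf A$. Stable rank: $\mathrm{sr}_s(\mathbf A)=\lambda_{s+1}^{-1}\sum_{i>s}\lambda_i$. For a p.s.d. $n\times n$ matrix $\mathbf K$, $S\sim\mathrm{DPP}(\mathbf K)$ is the distribution over all subsets $S\subseteq\{1,\dots,n\}$ (of any size) with $\Pr(S)=\det(\mathbf K_{S,S})/\det(\mathbf I+\mathbf K)$, $\mathbf K_{S,S}$ the principal submatrix indexed by $S$ (empty determinant $=1$). *)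

From HB Require Import structures.
From mathcomp Require Import all_boot all_order all_algebra.
From mathcomp Require Import reals.
Set Implicit Arguments. Unset Strict Implicit. Unset Printing Implicit Defensive.
Import Order.TTheory GRing.Theory Num.Theory.
Local Open Scope ring_scope.

Section Defs.
Variable R : realType.

Definition frob2 {p q : nat} (M : 'M[R]_(p, q)) : R :=
  \sum_(i < p) \sum_(j < q) M i j ^+ 2.

(* the n x m matrix whose rows are the columns a_i (i in S) of A, and 0 otherwise;
   its row space is span{a_i : i in S} *)
Definition cols_mx {m n : nat} (A : 'M[R]_(m, n)) (S : {set 'I_n}) : 'M[R]_(n, m) :=
  \matrix_(i < n) (if i \in S then row i A^T else 0).

(* orthogonal projection (m x m matrix) onto the row space of M:
   B^T (B B^T)^{-1} B, with B a basis (row_base) of that row space *)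
Definition orth_proj {k m : nat} (M : 'M[R]_(k, m)) : 'M[R]_m :=
  let B := row_base M in B^T *m invmx (B *m B^T) *m B.

Definition P_S {m n : nat} (A : 'M[R]_(m, n)) (S : {set 'I_n}) : 'M[R]_m :=
  orth_proj (cols_mx A S).

Definition Er {m n : nat} (A : 'M[R]_(m, n)) (S : {set 'I_n}) : R :=
  frob2 (A - P_S A S *m A).

Definition princ_sub {n : nat} (K : 'M[R]_n) (S : {set 'I_n}) : 'M[R]_(#|S|) :=
  \matrix_(i < #|S|, j < #|S|) K (enum_val i) (enum_val j).

Definition dpp_prob {n : nat} (K : 'M[R]_n) (S : {set 'I_n}) : R :=
  \det (princ_sub K S) / \det (1%:M + K).

Definition dpp_expect {n : nat} (K : 'M[R]_n) (f : {set 'I_n} -> R) : R :=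
  \sum_(S : {set 'I_n}) dpp_prob K S * f S.

(* lam : 'I_n -> R is the nonincreasing list of eigenvalues (with multiplicity)
   of the n x n matrix M; lam 0 = lambda_1, lam i = lambda_{i+1}. *)
Definition sorted_eigenvalues {n : nat} (M : 'M[R]_n) (lam : 'I_n -> R) : Prop :=
  char_poly M = \prod_(i < n) ('X - (lam i)%:P) /\
  (forall i j : 'I_n, (i <= j)%N -> lam j <= lam i).

(* sum_{i > k} lambda_i  (1-based), i.e. sum over 0-based indices i >= k *)
Definition tail_sum {n : nat} (lam : 'I_n -> R) (k : nat) : R :=
  \sum_(i < n | (k <= i)%N) lam i.

Definition OPT {n : nat} (lam : 'I_n -> R) (k : nat) : R := tail_sum lam k.

(* stable rank sr_s = lambda_{s+1}^{-1} sum_{i>s} lambda_i ; lambda_{s+1} = lam (s) 0-based *)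
Definition stable_rank {n : nat} (lam : 'I_n -> R) (s : nat) : R :=
  (\sum_(i < n | (s <= i)%N) lam i) / (\sum_(i < n | i == s :> nat) lam i).

End Defs.

From HB Require Import structures.
From mathcomp Require Import all_boot all_order all_algebra.
From mathcomp Require Import fingroup perm reals ring lra.
Import Order.TTheory GRing.Theory Num.Theory.
Local Open Scope ring_scope.
Set Implicit Arguments. Unset Strict Implicit. Unset Printing Implicit Defensive.

(* Write K = c A^T A with c = 1/alpha and mu_i = c lambda_i.  Expanding
   det (x I + K) along principal minors gives
   sum_S det K_S x^(n-|S|) = prod_i (x + mu_i): at x = 1 this is the DPP
   normalisation, and differentiating at x = 1 gives E|S| = sum_i mu_i/(1+mu_i).
   Bordering the Gram matrix of the columns in S by a column a_i and taking a
   Schur complement gives det K_(S+i) = c det K_S ||(I - P_S) a_i||^2; summing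
   over i outside S and then over S yields E[Er(S)] = alpha E|S|.
   It remains to bound E|S|: the first s terms are at most 1, the next k - s at
   most mu_(s+1)/(1+mu_(s+1)), and the tail at most c OPT_k.  Since
   lambda_(s+1) (t_s - k) <= OPT_k, the choice of alpha forces
   mu_(s+1) <= gamma - 1, which gives E|S| <= k - eps (k-s)/gamma, and hence
   E[Er] <= alpha k = OPT_k Phi/(1-eps). *)

Section PrincipalMinors.
Variable T : comNzRingType.

Lemma det_mxsub_inj p n (E : p = n) (M : 'M[T]_n) (f : 'I_p -> 'I_n) :
  injective f -> \det (mxsub f f M) = \det M.
Proof.
subst p => injf.
have -> : mxsub f f M = row_perm (perm injf) (col_perm (perm injf) M).
  by apply/matrixP => a b; rewrite !mxE !permE.
rewrite row_permE col_permE !det_mulmx !det_perm odd_permV.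
by rewrite mulrA mulrC mulrA -signr_addb addbb expr0 mul1r.
Qed.

Lemma det_mxsub_set p n (K : 'M[T]_n) (S : {set 'I_n}) (E : p = #|S|)
    (f : 'I_p -> 'I_n) : injective f -> (forall a, f a \in S) ->
  \det (mxsub f f K) = \det (mxsub enum_val enum_val K : 'M_#|S|).
Proof.
move=> injf fS; pose g a := enum_rank_in (fS a) (f a).
have gK a : enum_val (g a) = f a by rewrite enum_rankK_in.
have injg : injective g by move=> a b /(congr1 enum_val); rewrite !gK => /injf.
rewrite -(det_mxsub_inj E _ injg) -mxsub_comp.
by congr (\det _); apply: eq_mxsub => a /=; rewrite gK.
Qed.

Definition restrict_rows n (K : 'M[T]_n) (S : {set 'I_n}) : 'M[T]_n :=
  \matrix_(i, j) (if i \in S then K i j else (i == j)%:R).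

Lemma det_restrict_rows n (K : 'M[T]_n) (S : {set 'I_n}) :
  \det (restrict_rows K S) = \det (mxsub enum_val enum_val K : 'M_#|S|).
Proof.
pose f (a : 'I_(#|S| + #|~: S|)) : 'I_n :=
  match split a with inl r => enum_val r | inr r => enum_val r end.
have fL r : f (lshift _ r) = enum_val r.
  by rewrite /f -[lshift _ r]/(unsplit (inl r)) unsplitK.
have fR r : f (rshift _ r) = enum_val r.
  by rewrite /f -[rshift _ r]/(unsplit (inr r)) unsplitK.
have injf : injective f.
  move=> a b; case: (split_ordP a) => a' ->; case: (split_ordP b) => b' ->;
    rewrite ?fL ?fR => E.
  - by rewrite (enum_val_inj E).
  - by have := enum_valP b'; rewrite -E in_setC enum_valP.
  - by have := enum_valP a'; rewrite E in_setC enum_valP.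
  - by rewrite (enum_val_inj E).
rewrite -(det_mxsub_inj (etrans (cardsC S) (card_ord n)) _ injf).
have -> : mxsub f f (restrict_rows K S) =
    block_mx (mxsub enum_val enum_val K) (mxsub enum_val enum_val K) 0 1%:M.
  apply/matrixP => a b.
  case: (split_ordP a) => a' ->; case: (split_ordP b) => b' ->;
    rewrite ?(block_mxEul, block_mxEur, block_mxEdl, block_mxEdr) !mxE ?fL ?fR;
    rewrite ?enum_valP //.
  - have := enum_valP a'; rewrite in_setC => /negbTE ->.
    by case: eqP => // E; have := enum_valP a'; rewrite E in_setC enum_valP.
  - have := enum_valP a'; rewrite in_setC => /negbTE ->.
    by rewrite (inj_eq enum_val_inj).
by rewrite det_ublock det1 mulr1.
Qed.

Lemma expand_det_diag_add n (d : 'rV[T]_n) (K : 'M[T]_n) :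
  \det (diag_mx d + K) =
  \sum_(S : {set 'I_n}) (\prod_(i in ~: S) d 0 i) *
                        \det (mxsub enum_val enum_val K : 'M_#|S|).
Proof.
under [RHS]eq_bigr => S _ do rewrite -det_restrict_rows big_distrr.
rewrite exchange_big; apply: eq_bigr => s _ /=.
under eq_bigr do rewrite mxE addrC.
rewrite bigA_distr mulr_sumr; apply: eq_bigr => S _.
rewrite mulrCA; congr (_ * _).
rewrite (big_mkcond (fun i => i \in ~: S)) -big_split; apply: eq_bigr => i _ /=.
by rewrite !mxE inE; case: (i \in S); rewrite ?mul1r // mulr_natr.
Qed.

End PrincipalMinors.

Lemma det_block_schur (U : comUnitRingType) p q (G : 'M[U]_p) (g : 'M[U]_(p, q))
    (h : 'M[U]_(q, p)) (k : 'M[U]_q) : G \in unitmx ->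
  \det (block_mx G g h k) = \det G * \det (k - h *m invmx G *m g).
Proof.
move=> uG.
have -> : block_mx G g h k = block_mx 1%:M 0 (h *m invmx G) 1%:M *m
                             block_mx G g 0 (k - h *m invmx G *m g).
  by rewrite mulmx_block !mul1mx !mul0mx !addr0 mulmxKV // addrC subrK.
by rewrite det_mulmx det_lblock det_ublock !det1 !mul1r.
Qed.

Section GramProjection.
Variable F : fieldType.

Definition gram_proj p m (X : 'M[F]_(p, m)) : 'M[F]_m :=
  X^T *m invmx (X *m X^T) *m X.

Variables (p m : nat) (X : 'M[F]_(p, m)).

Lemma trmx_gram_proj : (gram_proj X)^T = gram_proj X.
Proof. by rewrite /gram_proj !trmx_mul trmx_inv trmx_mul !trmxK mulmxA. Qed.

Hypothesis uX : X *m X^T \in unitmx.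

Lemma gram_proj_fixed q (Y : 'M[F]_(q, m)) : (Y <= X)%MS -> Y *m gram_proj X = Y.
Proof.
by move=> /submxP [D ->]; rewrite /gram_proj !mulmxA -(mulmxA D X X^T) mulmxK.
Qed.

Lemma gram_proj_idem : gram_proj X *m gram_proj X = gram_proj X.
Proof.
rewrite {1}/gram_proj -!mulmxA gram_proj_fixed //.
by rewrite /gram_proj !mulmxA.
Qed.

End GramProjection.

Lemma eq_gram_proj (F : fieldType) p q m (X : 'M[F]_(p, m)) (Y : 'M[F]_(q, m)) :
  X *m X^T \in unitmx -> Y *m Y^T \in unitmx ->
  (X == Y)%MS -> gram_proj X = gram_proj Y.
Proof.
move=> uX uY /andP [XY YX].
have XYX : gram_proj X *m gram_proj Y = gram_proj X.
  by rewrite {1}/gram_proj -mulmxA gram_proj_fixed.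
have YXY : gram_proj Y *m gram_proj X = gram_proj Y.
  by rewrite {1}/gram_proj -mulmxA gram_proj_fixed.
by rewrite -XYX -[gram_proj X]trmx_gram_proj // -[gram_proj Y]trmx_gram_proj //
  -trmx_mul YXY trmx_gram_proj.
Qed.

Section RealGram.
Variable R : realFieldType.

Lemma row_sqnorm m (w : 'rV[R]_m) : (w *m w^T) 0 0 = \sum_j w 0 j ^+ 2.
Proof. by rewrite mxE; apply: eq_bigr => j _; rewrite mxE expr2. Qed.

Lemma row_sqnorm_ge0 m (w : 'rV[R]_m) : 0 <= (w *m w^T) 0 0.
Proof. by rewrite row_sqnorm sumr_ge0 // => j _; rewrite sqr_ge0. Qed.

Lemma row_sqnorm_eq0 m (w : 'rV[R]_m) : ((w *m w^T) 0 0 == 0) = (w == 0).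
Proof.
apply/idP/eqP => [|->]; last by rewrite mul0mx mxE.
rewrite row_sqnorm psumr_eq0 => [/allP w0|j _]; last exact: sqr_ge0.
by apply/rowP => j; rewrite mxE; apply/eqP; rewrite -sqrf_eq0 (implyP (w0 j _)).
Qed.

Lemma gram_unitmx p m (X : 'M[R]_(p, m)) : row_free X -> X *m X^T \in unitmx.
Proof.
move=> fX; rewrite unitmxE unitfE; apply/det0P => -[v /negP nz_v Xv0].
apply: nz_v; rewrite -(mulmx_free_eq0 _ fX) -row_sqnorm_eq0.
by rewrite trmx_mul mulmxA -(mulmxA v) Xv0 !mul0mx mxE.
Qed.

End RealGram.

Section ColumnSubsets.
Variables (R : realType) (m n : nat) (A : 'M[R]_(m, n)).

Lemma orth_proj_gram p k (X : 'M[R]_(p, m)) (M : 'M[R]_(k, m)) :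
  X *m X^T \in unitmx -> (X == M)%MS -> orth_proj M = gram_proj X.
Proof.
move=> uX XM; apply: eq_gram_proj => //; first exact/gram_unitmx/row_base_free.
by case/andP: XM => XM MX; apply/andP; rewrite !eq_row_base.
Qed.

Definition colsT (S : {set 'I_n}) : 'M[R]_(#|S|, m) := rowsub enum_val A^T.

Lemma row_colsT S a : row a (colsT S) = row (enum_val a) A^T.
Proof. exact: row_rowsub. Qed.

Lemma colsT_eqmx S : (colsT S == cols_mx A S)%MS.
Proof.
apply/andP; split; apply/row_subP => i.
  rewrite row_colsT.
  have -> : row (enum_val i) A^T = row (enum_val i) (cols_mx A S).
    by rewrite rowK enum_valP.
  exact: row_sub.
rewrite /cols_mx rowK; case: ifP => [iS | _]; last exact: sub0mx.
by rewrite -(enum_rankK_in iS iS) -row_colsT row_sub.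
Qed.

Definition residual (Q : 'M[R]_m) (j : 'I_n) : R :=
  (row j A^T *m (1%:M - Q) *m (row j A^T)^T) 0 0.

Lemma frob2_cols p (N : 'M[R]_(p, n)) :
  frob2 N = \sum_j (row j N^T *m (row j N^T)^T) 0 0.
Proof.
rewrite /frob2 exchange_big; apply: eq_bigr => j _.
by rewrite row_sqnorm; apply: eq_bigr => i _; rewrite !mxE.
Qed.

Lemma Er_residual S : colsT S *m (colsT S)^T \in unitmx ->
  Er A S = \sum_j residual (gram_proj (colsT S)) j.
Proof.
move=> uS; rewrite /Er /P_S (orth_proj_gram uS (colsT_eqmx S)) frob2_cols.
set Q := gram_proj (colsT S).
apply: eq_bigr => j _.
have -> : (A - Q *m A)^T = A^T *m (1%:M - Q).
  by rewrite raddfB /= trmx_mul trmx_gram_proj mulmxBr mulmx1.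
rewrite row_mul /residual trmx_mul -!mulmxA; congr ((_ *m _) 0 0).
have idemQ : (1%:M - Q) *m (1%:M - Q)^T = 1%:M - Q.
  rewrite raddfB /= trmx1 trmx_gram_proj mulmxBr mulmx1 mulmxBl mul1mx.
  by rewrite gram_proj_idem // subrr subr0.
by rewrite mulmxA idemQ.
Qed.

Lemma residual_in S j : colsT S *m (colsT S)^T \in unitmx ->
  j \in S -> residual (gram_proj (colsT S)) j = 0.
Proof.
move=> uS jS; rewrite /residual mulmxBr mulmx1 gram_proj_fixed //.
  by rewrite subrr mul0mx mxE.
by rewrite -(enum_rankK_in jS jS) -row_colsT row_sub.
Qed.

End ColumnSubsets.

Lemma mxsub_gram (R : comNzRingType) m n p (A : 'M[R]_(m, n)) (f : 'I_p -> 'I_n) :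
  mxsub f f (A^T *m A) = rowsub f A^T *m (rowsub f A^T)^T.
Proof. by rewrite mxsub_mul trmx_mxsub trmxK. Qed.

Section SchurStep.
Variables (R : realType) (m n : nat) (A : 'M[R]_(m, n)) (c : R).
Let K := c *: (A^T *m A).

Lemma princ_sub_gram S : princ_sub K S = c *: (colsT A S *m (colsT A S)^T).
Proof. by rewrite -mxsub_gram -linearZ. Qed.

Lemma det_princ_subU1 (S : {set 'I_n}) i : i \notin S ->
  \det (princ_sub K (i |: S)) = c ^+ (#|S| + 1) *
    \det (col_mx (colsT A S) (row i A^T) *m (col_mx (colsT A S) (row i A^T))^T).
Proof.
(* Listing i after the elements of S turns K_(S+i) into a bordered Gram matrix. *)
move=> iS; pose f (a : 'I_(#|S| + 1)) : 'I_n :=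
  match split a with inl r => enum_val r | inr _ => i end.
have fL r : f (lshift _ r) = enum_val r.
  by rewrite /f -[lshift _ r]/(unsplit (inl r)) unsplitK.
have fR r : f (rshift _ r) = i.
  by rewrite /f -[rshift _ r]/(unsplit (inr r)) unsplitK.
have injf : injective f.
  move=> a b; case: (split_ordP a) => a' ->; case: (split_ordP b) => b' ->;
    rewrite ?fL ?fR => E.
  - by rewrite (enum_val_inj E).
  - by move: iS; rewrite -E enum_valP.
  - by move: iS; rewrite E enum_valP.
  - by rewrite !ord1.
have fS a : f a \in i |: S.
  case: (split_ordP a) => a' ->; rewrite ?fL ?fR !inE ?eqxx //.
  by rewrite enum_valP orbT.
have cardSi : (#|S| + 1 = #|i |: S|)%N by rewrite cardsU1 iS addnC.
transitivity (\det (mxsub f f K)).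
  by rewrite (det_mxsub_set K cardSi injf fS).
rewrite linearZ /= mxsub_gram detZ.
suff -> : rowsub f A^T = col_mx (colsT A S) (row i A^T) by [].
apply/matrixP => a l; case: (split_ordP a) => a' ->.
  by rewrite col_mxEu !mxE fL.
by rewrite col_mxEd !mxE fR.
Qed.

Lemma det_princ_subU1_schur (S : {set 'I_n}) i : i \notin S ->
  colsT A S *m (colsT A S)^T \in unitmx ->
  \det (princ_sub K (i |: S)) =
    c * \det (princ_sub K S) * residual A (gram_proj (colsT A S)) i.
Proof.
move=> iS uS; rewrite det_princ_subU1 // princ_sub_gram detZ tr_col_mx mul_col_row.
rewrite det_block_schur // det_mx11 exprD expr1 /residual /gram_proj.
rewrite mulmxBr mulmx1 mulmxBl !mulmxA; ring.
Qed.

Lemma det_princ_sub_eq0 (S : {set 'I_n}) :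
  colsT A S *m (colsT A S)^T \notin unitmx -> \det (princ_sub K S) = 0.
Proof.
by rewrite princ_sub_gram detZ unitmxE unitfE negbK => /eqP ->; rewrite mulr0.
Qed.

Lemma det_princ_subU1_eq0 (S : {set 'I_n}) i : i \notin S ->
  colsT A S *m (colsT A S)^T \notin unitmx -> \det (princ_sub K (i |: S)) = 0.
Proof.
move=> iS /negP uS; rewrite det_princ_subU1 //.
suff : \det (col_mx (colsT A S) (row i A^T) *m
    (col_mx (colsT A S) (row i A^T))^T) \notin GRing.unit.
  by rewrite unitfE negbK => /eqP ->; rewrite mulr0.
have ltS : (\rank (colsT A S) < #|S|)%N.
  by rewrite ltn_neqAle rank_leq_row andbT; apply: contra_notN uS => /gram_unitmx.
rewrite -unitmxE -row_free_unit /row_free neq_ltn; apply/orP; left.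
apply: leq_ltn_trans (mxrankM_maxl _ _) _; rewrite -addsmxE.
apply: leq_ltn_trans (mxrank_adds_leqif _ _).1 _.
by rewrite -addSn leq_add // rank_leq_row.
Qed.

Lemma princ_sub_Er (S : {set 'I_n}) :
  c * \det (princ_sub K S) * Er A S =
  \sum_(i | i \notin S) \det (princ_sub K (i |: S)).
Proof.
have [uS | uS] := boolP (colsT A S *m (colsT A S)^T \in unitmx); last first.
  rewrite det_princ_sub_eq0 // mulr0 mul0r big1 // => i iS.
  exact: det_princ_subU1_eq0.
rewrite Er_residual // (bigID (mem S)) /= big1 ?add0r => [|j]; last first.
  exact: residual_in.
by rewrite mulr_sumr; apply: eq_bigr => i iS; rewrite det_princ_subU1_schur.
Qed.

End SchurStep.

Lemma sum_setU1 (V : nmodType) (I : finType) (F : {set I} -> V) :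
  \sum_(S : {set I}) \sum_(i | i \notin S) F (i |: S) =
  \sum_(S : {set I}) F S *+ #|S|.
Proof.
under eq_bigr do rewrite big_mkcond.
under [RHS]eq_bigr => S _ do rewrite -sumr_const big_mkcond.
rewrite exchange_big [RHS]exchange_big; apply: eq_bigr => i _ /=.
rewrite -!big_mkcond [RHS](reindex_onto (fun S => i |: S) (fun S => S :\ i)) /=;
  last by move=> S iS; apply: setD1K.
apply: eq_bigl => S; rewrite setU11.
by apply/idP/eqP => [iS | <-]; [rewrite setU1K | rewrite setD11].
Qed.

Lemma dpp_expectE (R : realType) n (K : 'M[R]_n) (f : {set 'I_n} -> R) :
  dpp_expect K f = (\det (1%:M + K))^-1 * \sum_S \det (princ_sub K S) * f S.
Proof.
rewrite /dpp_expect /dpp_prob mulr_sumr.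
by apply: eq_bigr => S _; rewrite mulrAC mulrC.
Qed.

Lemma dpp_expect_Er (R : realType) m n (A : 'M[R]_(m, n)) (c : R) : c != 0 ->
  dpp_expect (c *: (A^T *m A)) (Er A) =
  c^-1 * dpp_expect (c *: (A^T *m A)) (fun S => #|S|%:R).
Proof.
move=> c_neq0; rewrite !dpp_expectE mulrCA; congr (_ * _); set K := c *: _.
transitivity
  (c^-1 * \sum_(S : {set 'I_n}) \sum_(i | i \notin S) \det (princ_sub K (i |: S))).
  rewrite mulr_sumr; apply: eq_bigr => S _.
  by rewrite -princ_sub_Er !mulrA mulVf ?mul1r.
rewrite (sum_setU1 (fun T => \det (princ_sub K T))); congr (_ * _).
by apply: eq_bigr => S _; rewrite mulr_natr.
Qed.

Lemma horner_char_poly (R : comNzRingType) n (M : 'M[R]_n) x :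
  (char_poly M).[x] = \det (x%:M - M).
Proof.
rewrite /char_poly -horner_evalE -det_map_mx; congr (\det _).
apply/matrixP => i j; rewrite !mxE /horner_eval.
change (('X *+ (i == j) - (M i j)%:P).[x] = x *+ (i == j) - M i j).
by rewrite hornerD hornerN hornerMn hornerX hornerC.
Qed.

Lemma poly_horner_inj (R : numDomainType) (p q : {poly R}) :
  (forall x, p.[x] = q.[x]) -> p = q.
Proof.
move=> pq; apply/eqP; rewrite -subr_eq0; apply/eqP.
apply: (@roots_geq_poly_eq0 _ _ [seq i%:R | i <- iota 0 (size (p - q))]).
- by apply/allP => _ /mapP [i _ ->]; rewrite rootE hornerD hornerN pq subrr.
- by rewrite map_inj_uniq ?iota_uniq // => i j /eqP; rewrite eqr_nat => /eqP.
- by rewrite size_map size_iota.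
Qed.

Lemma horner_deriv_prod_XaddC (F : fieldType) (I : Type) (r : seq I) (f : I -> F)
    (x : F) :
  (forall i, x + f i != 0) ->
  (\prod_(i <- r) ('X + (f i)%:P))^`().[x] =
  (\prod_(i <- r) (x + f i)) * \sum_(i <- r) (x + f i)^-1.
Proof.
move=> nz; elim: r => [|a r IH]; first by rewrite !big_nil derivC hornerC mul1r.
rewrite !big_cons derivM derivD derivX derivC addr0 mul1r hornerD hornerM IH.
rewrite horner_prod hornerD hornerX hornerC.
under eq_bigr do rewrite hornerD hornerX hornerC.
by field; apply: nz.
Qed.

Lemma gram_eigenvalues_ge0 (R : realFieldType) m n (A : 'M[R]_(m, n))
    (lam : 'I_n -> R) :
  char_poly (A^T *m A) = \prod_(i < n) ('X - (lam i)%:P) -> forall i, 0 <= lam i.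
Proof.
move=> char_AA i; set a := lam i.
have : eigenvalue (A^T *m A) a.
  rewrite eigenvalue_root_char char_AA rootE horner_prod (bigD1 i) //=.
  by rewrite hornerXsubC subrr mul0r.
move/eigenvalueP => [v Av nz_v].
have vv_gt0 : 0 < (v *m v^T) 0 0 by rewrite lt_def row_sqnorm_eq0 nz_v row_sqnorm_ge0.
have vAAv : ((v *m A^T) *m (v *m A^T)^T) 0 0 = a * (v *m v^T) 0 0.
  by rewrite trmx_mul trmxK !mulmxA -(mulmxA v) Av -scalemxAl mxE.
by rewrite -(pmulr_lge0 _ vv_gt0) -vAAv row_sqnorm_ge0.
Qed.

Section DPPSpectrum.
Variables (R : realType) (n : nat) (M : 'M[R]_n) (lam : 'I_n -> R) (c : R).
Hypothesis char_M : char_poly M = \prod_(i < n) ('X - (lam i)%:P).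
Hypothesis c_neq0 : c != 0.
Let K := c *: M.

Lemma det_scalar_add x : \det (x%:M + K) = \prod_i (x + c * lam i).
Proof.
have -> : x%:M + K = (- c) *: ((- x / c)%:M - M).
  by apply/matrixP => i j; rewrite !mxE; case: (i == j) => /=; field.
rewrite detZ -horner_char_poly char_M horner_prod -[in (- c) ^+ n](card_ord n).
by rewrite -prodrMl; apply: eq_bigr => i _; rewrite hornerXsubC; field.
Qed.

Lemma sum_princ_sub_pow x :
  \sum_S \det (princ_sub K S) * x ^+ #|~: S| = \prod_i (x + c * lam i).
Proof.
rewrite -det_scalar_add -diag_const_mx expand_det_diag_add.
apply: eq_bigr => S _; rewrite mulrC.
by under eq_bigr do rewrite mxE; rewrite prodr_const.
Qed.

Hypothesis nz_1Dlam : forall i, 1 + c * lam i != 0.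

Lemma sum_princ_sub_card : \sum_S \det (princ_sub K S) * #|S|%:R =
  \det (1%:M + K) * \sum_i c * lam i / (1 + c * lam i).
Proof.
pose p := \sum_(S : {set 'I_n}) (\det (princ_sub K S))%:P * 'X^#|~: S|.
have -> : \sum_S \det (princ_sub K S) * #|S|%:R = p.[1] *+ n - p^`().[1].
  rewrite raddf_sum /= !horner_sum -sumrMnl -sumrB; apply: eq_bigr => S _.
  rewrite derivM derivC mul0r add0r derivXn !(hornerM, hornerC, hornerMn, hornerXn).
  have cardS : #|S| = (#|'I_n| - #|~: S|)%N by rewrite -(cardsC S) addnK.
  rewrite !expr1n mulr1 -[_ *+ n]mulr_natr -mulrBr; congr (_ * _).
  by rewrite cardS natrB ?max_card // card_ord.
have -> : p = \prod_(i < n) ('X + (c * lam i)%:P).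
  apply: poly_horner_inj => x; rewrite horner_sum horner_prod.
  under [RHS]eq_bigr do rewrite hornerD hornerX hornerC.
  rewrite -sum_princ_sub_pow; apply: eq_bigr => S _.
  by rewrite hornerM hornerC hornerXn.
rewrite (horner_deriv_prod_XaddC _ nz_1Dlam) horner_prod.
under eq_bigr do rewrite hornerD hornerX hornerC.
rewrite -det_scalar_add -mulr_natr -mulrBr; congr (_ * _).
rewrite -[n in n%:R]card_ord -sumr_const -sumrB; apply: eq_bigr => i _.
by field.
Qed.

Lemma dpp_expect_card :
  dpp_expect K (fun S => #|S|%:R) = \sum_i c * lam i / (1 + c * lam i).
Proof.
rewrite dpp_expectE sum_princ_sub_card mulKf // det_scalar_add.
by rewrite prodf_seq_neq0; apply/allP => i _; apply: nz_1Dlam.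
Qed.

End DPPSpectrum.

Lemma frac1D_le1 (R : realFieldType) (u : R) : 0 <= u -> u / (1 + u) <= 1.
Proof. by move=> u0; rewrite ler_pdivrMr; lra. Qed.

Lemma frac1D_le (R : realFieldType) (u : R) : 0 <= u -> u / (1 + u) <= u.
Proof. by move=> u0; rewrite ler_pdivrMr; [nra | lra]. Qed.

Lemma ler_frac1D (R : realFieldType) (u v : R) :
  0 <= u -> u <= v -> u / (1 + u) <= v / (1 + v).
Proof.
move=> u0 uv; rewrite ler_pdivrMr; last lra.
by rewrite mulrAC ler_pdivlMr; lra.
Qed.

Lemma sqrt1D2_ge1 (R : rcfType) (x : R) : 0 <= x -> 1 <= Num.sqrt (1 + 2 * x).
Proof. by move=> x0; rewrite -[X in X <= _]sqrtr1 ler_sqrt; lra. Qed.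

Lemma sqrt1D2_mulB1_ge (R : rcfType) (x : R) : 0 <= x ->
  x <= Num.sqrt (1 + 2 * x) * (Num.sqrt (1 + 2 * x) - 1).
Proof.
move=> x0; have g1 := sqrt1D2_ge1 x0.
have g2 : Num.sqrt (1 + 2 * x) ^+ 2 = 1 + 2 * x by rewrite sqr_sqrtr //; lra.
move: g1 g2; set g := Num.sqrt _ => g1 g2.
have g_le : g <= 1 + x.
  rewrite -(@ler_pXn2r _ 2) ?nnegrE ?g2 //; try lra.
  by nra.
by rewrite mulrBr mulr1 -expr2 g2; lra.
Qed.

Lemma sum_le_card_range (R : numDomainType) n (P : pred 'I_n) (f : 'I_n -> R) lo hi b :
  (forall i, P i -> lo <= i < hi)%N -> 0 <= b -> (forall i, P i -> f i <= b) ->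
  \sum_(i | P i) f i <= (hi - lo)%:R * b.
Proof.
move=> Prange b0 fb; apply: le_trans (ler_sum _ fb) _.
rewrite sumr_const -[b *+ _]mulr_natl.
rewrite ler_wpM2r // ler_nat cardE -(size_map val) -(size_iota lo (hi - lo)).
apply: uniq_leq_size => [|x /mapP [i]].
  by rewrite (map_inj_uniq val_inj) enum_uniq.
rewrite mem_enum => /Prange /andP [loi ihi] ->.
by rewrite mem_iota loi subnKC ?ihi // (leq_trans loi (ltnW ihi)).
Qed.

Section SpectralTail.
Variables (R : realType) (n : nat) (lam : 'I_n -> R).
Hypothesis lam_ge0 : forall i, 0 <= lam i.
Hypothesis lam_sorted : forall i j : 'I_n, (i <= j)%N -> lam j <= lam i.
Variables (s k : nat).
Hypotheses (s_lt_n : (s < n)%N) (s_lt_k : (s < k)%N).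
Hypothesis k_lt_t : k%:R < s%:R + stable_rank lam s.
Local Notation lam_s := (lam (Ordinal s_lt_n)).

Lemma stable_rankE : stable_rank lam s = tail_sum lam s / lam_s.
Proof. by rewrite /stable_rank [X in _ / X](big_pred1 (Ordinal s_lt_n)). Qed.

(* If lam_s were 0, stable_rank lam s would be _ / 0 = 0, contradicting s < k < t. *)
Lemma lam_s_gt0 : 0 < lam_s.
Proof.
rewrite lt_def lam_ge0 andbT; apply/eqP => lam_s0; move: k_lt_t.
by rewrite stable_rankE lam_s0 invr0 mulr0 addr0 ltr_nat ltnNge (ltnW s_lt_k).
Qed.

Lemma tail_sum_split :
  tail_sum lam s = \sum_(i < n | (s <= i < k)%N) lam i + OPT lam k.
Proof.
rewrite /OPT /tail_sum (bigID (fun i : 'I_n => (i < k)%N)) /=; congr (_ + _).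
by apply: eq_bigl => i; rewrite -leqNgt andb_idl // => /(leq_trans (ltnW s_lt_k)).
Qed.

Lemma OPT_ge : lam_s * (s%:R + stable_rank lam s - k%:R) <= OPT lam k.
Proof.
have band : \sum_(i < n | (s <= i < k)%N) lam i <= (k - s)%:R * lam_s.
  by apply: sum_le_card_range => // i /andP [si _]; apply: lam_sorted.
have -> : lam_s * (s%:R + stable_rank lam s - k%:R) =
          tail_sum lam s - (k - s)%:R * lam_s.
  rewrite stable_rankE natrB ?(ltnW s_lt_k) //; field.
  exact: lt0r_neq0 lam_s_gt0.
rewrite tail_sum_split; lra.
Qed.

Lemma ratio_ge0 : 0 <= (k%:R - s%:R) / (s%:R + stable_rank lam s - k%:R).
Proof.
by apply: divr_ge0; rewrite subr_ge0 ?ler_nat; [apply: ltnW | apply: ltW].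
Qed.

Lemma gamma_ge1 :
  1 <= Num.sqrt (1 + 2 * (k%:R - s%:R) / (s%:R + stable_rank lam s - k%:R)).
Proof. by rewrite -mulrA sqrt1D2_ge1 // ratio_ge0. Qed.

Lemma OPT_gt0 : 0 < OPT lam k.
Proof. by apply: lt_le_trans OPT_ge; rewrite mulr_gt0 ?lam_s_gt0 ?subr_gt0. Qed.

Lemma sum_frac_le c : 0 <= c ->
  \sum_i c * lam i / (1 + c * lam i) <=
  s%:R + (k - s)%:R * (c * lam_s / (1 + c * lam_s)) + c * OPT lam k.
Proof.
move=> c0; have clam_ge0 i : 0 <= c * lam i by rewrite mulr_ge0.
rewrite (bigID (fun i : 'I_n => (i < k)%N)) (bigID (fun i : 'I_n => (i < s)%N)) /=.
apply: lerD; first apply: lerD.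
- rewrite -[s%:R]mulr1 -[s in s%:R]subn0.
  apply: sum_le_card_range => // [i /andP [_ ->] | i _]; first exact: leq0n.
  exact: frac1D_le1.
- apply: sum_le_card_range => [i /andP [ki si] | | i /andP [_ si]].
  + by rewrite ki andbT leqNgt.
  + by rewrite divr_ge0 // addr_ge0.
  + rewrite -leqNgt in si.
    by apply: ler_frac1D => //; apply: ler_wpM2l => //; apply: lam_sorted.
- rewrite /OPT /tail_sum mulr_sumr.
  under [X in _ <= X]eq_bigl do rewrite leqNgt.
  by apply: ler_sum => i _; apply: frac1D_le.
Qed.

Lemma lam_s_le_threshold (g eps : R) : 0 <= eps -> eps < 1 ->
  (k%:R - s%:R) / (s%:R + stable_rank lam s - k%:R) <= g * (g - 1) ->
  lam_s <= (g - 1) * (g * OPT lam k / ((1 - eps) * (k%:R - s%:R))).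
Proof.
move=> eps0 eps1 gap; have l_gt0 := lam_s_gt0; have O_ge := OPT_ge.
move: gap O_ge; set d := k%:R - s%:R; set tk := _ - k%:R => gap O_ge.
have d_gt0 : 0 < d by rewrite subr_gt0 ltr_nat.
have tk_gt0 : 0 < tk by rewrite subr_gt0.
rewrite mulrA ler_pdivlMr ?mulr_gt0 ?subr_gt0 ?ltr_nat //.
have -> : (g - 1) * (g * OPT lam k) = OPT lam k * (g * (g - 1)) by ring.
apply: le_trans (_ : lam_s * d <= _).
  by apply: ler_wpM2l; [apply: ltW | apply: ler_piMl; [apply: ltW | lra]].
have -> : lam_s * d = lam_s * tk * (d / tk) by field; apply: lt0r_neq0.
by apply: ler_pM => //; [apply: mulr_ge0 | apply: divr_ge0]; apply: ltW.
Qed.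

Lemma expected_size_le (eps gamma alpha : R) : 0 <= eps -> eps < 1 ->
  gamma = Num.sqrt (1 + 2 * (k%:R - s%:R) / (s%:R + stable_rank lam s - k%:R)) ->
  alpha = gamma * OPT lam k / ((1 - eps) * (k%:R - s%:R)) ->
  \sum_i alpha^-1 * lam i / (1 + alpha^-1 * lam i) <=
  k%:R - eps * (k%:R - s%:R) / gamma.
Proof.
move=> eps0 eps1 gammaE alphaE.
have g_ge1 : 1 <= gamma by rewrite gammaE gamma_ge1.
have d_gt0 : 0 < k%:R - s%:R :> R by rewrite subr_gt0 ltr_nat.
have alpha_gt0 : 0 < alpha by rewrite alphaE divr_gt0 ?mulr_gt0 ?OPT_gt0 //; lra.
have cl : alpha^-1 * lam_s <= gamma - 1.
  rewrite mulrC ler_pdivrMr // alphaE; apply: lam_s_le_threshold => //.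
  by rewrite gammaE -mulrA sqrt1D2_mulB1_ge // ratio_ge0.
have c_ge0 : 0 <= alpha^-1 by rewrite invr_ge0 ltW.
have frac_le : alpha^-1 * lam_s / (1 + alpha^-1 * lam_s) <= 1 - gamma^-1.
  have -> : 1 - gamma^-1 = (gamma - 1) / (1 + (gamma - 1)) by field; lra.
  by apply: ler_frac1D cl; apply: mulr_ge0.
have cO : alpha^-1 * OPT lam k = (1 - eps) * (k%:R - s%:R) / gamma.
  by rewrite alphaE; field; rewrite !lt0r_neq0 ?OPT_gt0 //; lra.
apply: le_trans (sum_frac_le c_ge0) _; rewrite natrB ?(ltnW s_lt_k) // cO.
set d := k%:R - s%:R.
have : d * (alpha^-1 * lam_s / (1 + alpha^-1 * lam_s)) <= d * (1 - gamma^-1).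
  by apply: ler_wpM2l => //; apply: ltW.
have -> : k%:R - eps * d / gamma = s%:R + d * (1 - gamma^-1) + (1 - eps) * d / gamma.
  by rewrite /d; field; lra.
lra.
Qed.

End SpectralTail.

Theorem lemma1 (R : realType) (m n : nat) (A : 'M[R]_(m, n))
  (lam : 'I_n -> R) (Hlam : sorted_eigenvalues (A^T *m A) lam)
  (eps : R) (Heps0 : 0 <= eps) (Heps1 : eps < 1)
  (s : nat) (Hs : (s < \rank A)%N)
  (k : nat) (Hsk : (s < k)%N)
  (Hkt : k%:R < s%:R + stable_rank lam s) :
  let t := s%:R + stable_rank lam s in
  let gamma := Num.sqrt (1 + 2 * (k%:R - s%:R) / (t - k%:R)) in
  let Phi := (1 + s%:R / (k%:R - s%:R)) * gamma in
  let alpha := gamma * OPT lam k / ((1 - eps) * (k%:R - s%:R)) in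
  let K := alpha^-1 *: (A^T *m A) in
  dpp_expect K (Er A) / OPT lam k <= Phi / (1 - eps) /\
  dpp_expect K (fun S => (#|S|)%:R) <= k%:R - eps * (k%:R - s%:R) / gamma.
Proof.
move=> t gamma Phi alpha K; have [char_AA lam_sorted] := Hlam.
have lam_ge0 := gram_eigenvalues_ge0 char_AA.
have s_lt_n : (s < n)%N := leq_trans Hs (rank_leq_col A).
have O_gt0 := OPT_gt0 lam_ge0 lam_sorted s_lt_n Hsk Hkt.
have g_ge1 : 1 <= gamma := gamma_ge1 Hsk Hkt.
have d_gt0 : 0 < k%:R - s%:R :> R by rewrite subr_gt0 ltr_nat.
have alpha_gt0 : 0 < alpha by rewrite divr_gt0 ?mulr_gt0 ?subr_gt0 //; lra.
have E_card : dpp_expect K (fun S => #|S|%:R) =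
              \sum_i alpha^-1 * lam i / (1 + alpha^-1 * lam i).
  apply: dpp_expect_card char_AA _ _ => [|i]; first by rewrite invr_eq0 gt_eqF.
  by rewrite gt_eqF // ltr_pwDl // mulr_ge0 // invr_ge0 ltW.
have card_le :
    dpp_expect K (fun S => #|S|%:R) <= k%:R - eps * (k%:R - s%:R) / gamma.
  rewrite E_card; apply: (expected_size_le lam_ge0 lam_sorted s_lt_n Hsk Hkt) => //.
split=> //; rewrite dpp_expect_Er ?invr_eq0 ?gt_eqF // invrK.
have -> : Phi / (1 - eps) = alpha * k%:R / OPT lam k.
  by rewrite /Phi /alpha; field; rewrite !gt_eqF //; lra.
rewrite ler_pM2r ?invr_gt0 // ler_pM2l //; apply: le_trans card_le _.
by rewrite gerBl divr_ge0 ?mulr_ge0 //; lra.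
Qed.
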